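(* Let $X$ be a separable $\mathbb{R}$-rigid space with $|X|\ge 2$ and $G$ an infinite Abelian group. Then every Korovin orbit $G_f$ in $X^G$ is $\mathbb{R}$-rigid.
   Context: $X^G$ carries the product topology. For $f\in X^G$ and $g\in G$ let $gf\in X^G$ be given by $(gf)(x)=f(xg)$, and let $G_f=\{gf:g\in G\}\subseteq X^G$ with the subspace topology. The map $f\colon G\to X$ is a Korovin mapping if $\pi_M(G_f)=X^M$ for every countable $M\subseteq G$, where $\pi_M\colon X^G\to X^M$ is the projection; in that case $G_f$ is called a Korovin orbit. A space is $\mathbb{R}$-rigid if every continuous real-valued function on it is constant. *)

From HB Require Import structures.
From mathcomp Require Import all_boot all_order all_algebra.
From mathcomp Require Import all_classical all_reals all_analysis.
Set Implicit Arguments. Unset Strict Implicit. Unset Printing Implicit Defensive.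
Import Order.TTheory GRing.Theory Num.Theory.
Import numFieldNormedType.Exports.
Local Open Scope classical_set_scope.
Local Open Scope ring_scope.

Definition separable_space (T : topologicalType) : Prop :=
  exists D : set T, countable D /\ dense D.

Definition R_rigid (R : realType) (T : topologicalType) : Prop :=
  forall h : T -> R, continuous h -> forall a b : T, h a = h b.

Definition R_rigid_subset (R : realType) (T : topologicalType) (A : set T) : Prop :=
  forall h : T -> R, {within A, continuous h} ->
    forall a b : T, A a -> A b -> h a = h b.

(* The shift  (g f)(x) = f (x g), written additively for an abelian group. *)
Definition gshift (G : zmodType) (X : Type) (f : G -> X) (g : G) : G -> X :=
  fun x => f (x + g).

Definition orbit_set (G : zmodType) (X : topologicalType) (f : G -> X)
  : set {ptws G -> X} := range (gshift f).

(* Korovin mapping: pi_M(G_f) = X^M for every countable M subset of G,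
   i.e. every function M -> X is the restriction to M of some g f. *)
Definition Korovin_mapping (G : zmodType) (X : Type) (f : G -> X) : Prop :=
  forall M : set G, countable M ->
    forall h : G -> X, exists g : G, forall x, M x -> gshift f g x = h x.

(* Let h be real and continuous on A.  Near any point,
   h is controlled up to eps by finitely many coordinates.  Using a countable
   dense D in X, a closing-off argument yields a countable M in G such that h c
   depends only on c restricted to M.  Changing a single coordinate i then gives
   the map y |-> h (c with c i := y), continuous on X and hence constant by
   R-rigidity; so h ignores finitely many coordinates of M, and as it is locally
   controlled by finitely many coordinates, it is constant on A. *)

From HB Require Import structures.
From mathcomp Require Import all_boot all_order all_algebra.
From mathcomp Require Import all_classical all_reals all_analysis.
From mathcomp Require Import lra.
Set Implicit Arguments. Unset Strict Implicit. Unset Printing Implicit Defensive.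
Import Order.TTheory GRing.Theory Num.Theory.
Import numFieldNormedType.Exports.
Local Open Scope classical_set_scope.
Local Open Scope ring_scope.

Lemma countableU T (A B : set T) : countable A -> countable B -> countable (A `|` B).
Proof.
move=> cA cB; have -> : A `|` B = \bigcup_(b in [set: bool]) (if b then A else B).
  by apply/seteqP; split=> [x [Ax|Bx]|x [[] _ ?]]; [exists true|exists false|left|right].
by apply: bigcup_countable => // -[].
Qed.

Lemma dist_lt_eq (R : numFieldType) (x y : R) :
  (forall e, 0 < e -> `|x - y| < e) -> x = y.
Proof.
move=> xy; apply/eqP; rewrite -subr_eq0 -normr_le0.
by apply/ler_addgt0Pr => e /xy/ltW; rewrite add0r.
Qed.

Lemma dist_lt_natSinv_eq (R : realType) (C x y : R) : 0 < C ->
  (forall k, `|x - y| < k.+1%:R^-1 * C) -> x = y.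
Proof.
move=> C_gt0 xy; apply: dist_lt_eq => e e_gt0.
have eC_gt0 : 0 < e / C by rewrite divr_gt0.
have [N _ /(_ N (leqnn N))] := near_infty_natSinv_lt (PosNum eC_gt0).
by rewrite /= -(ltr_pM2r C_gt0) divfK ?gt_eqF //; apply: lt_trans.
Qed.

Lemma grid_approx (R : archiRealFieldType) (x u : R) : 0 < u ->
  exists z : int, `|x - z%:~R * u| < u.
Proof.
move=> u_gt0; exists (Num.floor (x / u)).
have /andP[lo hi] := floor_itv (x / u).
rewrite ler_pdivlMr // in lo; rewrite ltr_pdivrMr // intrD mulrDl mul1r in hi.
by rewrite ltr_norml; apply/andP; split; lra.
Qed.

Section FinitaryClosure.
Variables (T : eqType) (phi : set T -> set T).
Hypothesis phi_countable : forall F, finite_set F -> countable (phi F).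

Fixpoint iter_closure n : set T :=
  if n is m.+1 then
    iter_closure m `|` \bigcup_(F in [set F | F `<=` iter_closure m /\ finite_set F]) phi F
  else set0.

Lemma countable_iter_closure n : countable (iter_closure n).
Proof.
elim: n => //= n cn; apply: countableU => //.
by apply: bigcup_countable => [|F [_]]; [exact: countable_finite_subset|exact: phi_countable].
Qed.

Lemma iter_closure_mono m n : (m <= n)%N -> iter_closure m `<=` iter_closure n.
Proof.
move=> /subnK <-; elim: (n - m)%N => // k IH x /IH xk; rewrite addSn; by left.
Qed.

Lemma finite_sub_iter_closure F : finite_set F -> F `<=` \bigcup_n iter_closure n ->
  exists n, F `<=` iter_closure n.
Proof.
move=> /finite_seqP[s ->]; elim: s => [|x s IH] sub; first by exists 0%N.
have [|n sn] := IH; first by move=> y sy; apply: sub; rewrite /= in_cons sy orbT.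
have [m _ xm] := sub x (mem_head _ _).
exists (maxn m n) => y /=; rewrite in_cons => /orP[/eqP->|ys].
  by apply: iter_closure_mono xm; exact: leq_maxl.
by apply: iter_closure_mono (sn y ys); exact: leq_maxr.
Qed.

Lemma countable_finitary_closure : exists2 M : set T, countable M &
  forall F, finite_set F -> F `<=` M -> phi F `<=` M.
Proof.
exists (\bigcup_n iter_closure n).
  by apply: bigcup_countable => // n _; exact: countable_iter_closure.
move=> F fF /(finite_sub_iter_closure fF)[n Fn] x phiFx.
by exists n.+1 => //=; right; exists F.
Qed.

End FinitaryClosure.

Section ProductBoxes.
Variables (G : eqType) (X : topologicalType).

Definition box_nbhs (c : G -> X) : set_system (G -> X) :=
  [set S | exists (L : seq G) (U : G -> set X), (forall i, open_nbhs (c i) (U i)) /\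
     [set e | forall i, i \in L -> U i (e i)] `<=` S].

Lemma box_nbhs_filter c : Filter (box_nbhs c).
Proof.
constructor.
- by exists [::], (fun=> setT); split=> // i; split=> //; exact: openT.
- move=> P Q [L1 [U1 [U1c sP]]] [L2 [U2 [U2c sQ]]].
  exists (L1 ++ L2), (fun i => U1 i `&` U2 i); split.
    by move=> i; apply: open_nbhsI; [exact: U1c|exact: U2c].
  move=> e eU; split; [apply: sP => i iL|apply: sQ => i iL];
    by case: (eU i); rewrite // mem_cat iL ?orbT.
- by move=> P Q PQ [L [U [Uc sP]]]; exists L, U; split=> // e /sP/PQ.
Qed.

Lemma nbhs_ptws_box (c : {ptws G -> X}) : nbhs c `<=` box_nbhs c.
Proof.
have Fc := box_nbhs_filter c; suff : box_nbhs c --> c by move=> + S; apply.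
apply/cvg_sup => i S /=.
rewrite (@nbhsE (initial_topology (fun f : G -> X => f i))) => -[B [[V oV <-] Vc] BS].
exists [:: i], (fun j => if j == i then V else setT); split.
  by move=> j; case: eqP => [->|_]; [split|exact: open_nbhsT].
by move=> e /(_ i (mem_head _ _)); rewrite eqxx => Ve; exact: BS.
Qed.

End ProductBoxes.

Section Controls.
Variables (R : realType) (X : topologicalType) (G : choiceType).
Variables (A : set {ptws G -> X}) (h : {ptws G -> X} -> R).

Definition korovin_set := forall M : set G, countable M ->
  forall p : G -> X, exists2 e, A e & forall x, M x -> e x = p x.

Definition controls (L : seq G) (U : G -> set X) (c : {ptws G -> X}) (eps : R) :=
  (forall i, open_nbhs (c i) (U i)) /\
  forall e, A e -> (forall i, i \in L -> U i (e i)) -> `|h c - h e| < eps.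

Definition locally_controlled :=
  forall c, A c -> forall eps, 0 < eps -> exists L U, controls L U c eps.

Definition determined_by (M : set G) :=
  forall c c', A c -> A c' -> (forall x, M x -> c x = c' x) -> h c = h c'.

Lemma continuous_within_controlled : {within A, continuous h} -> locally_controlled.
Proof.
move=> /subspace_continuousP hc c Ac eps eps_gt0.
have /cvgr_dist_lt/(_ eps eps_gt0)/nbhs_ptws_box[L [U [Uc sU]]] := hc c Ac.
by exists L, U; split=> // e Ae /sU; apply.
Qed.

Hypothesis A_korovin : korovin_set.

Lemma controls_korovin L U c eps (N : set G) (p : G -> X) :
  controls L U c eps -> countable N -> (forall i, i \in L -> U i (p i)) ->
  exists2 e, A e /\ (forall x, N x -> e x = p x) & `|h c - h e| < eps.
Proof.
move=> [_ cU] cN pU.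
have [e Ae ep] := A_korovin (countableU cN (finite_set_countable (finite_seq L))) p.
exists e; first by split=> // x Nx; apply: ep; left.
by apply: cU => // i iL; rewrite ep; [exact: pU|right].
Qed.

End Controls.

Section RigidityFromDeterminingSet.
Variables (R : realType) (X : topologicalType) (G : choiceType).
Variables (A : set {ptws G -> X}) (h : {ptws G -> X} -> R).
Hypothesis A_korovin : korovin_set A.
Hypothesis h_controlled : locally_controlled A h.
Hypothesis X_rigid : R_rigid R X.
Variable M : set G.
Hypothesis M_countable : countable M.
Hypothesis h_determined : determined_by A h M.

Lemma determined_off_point i c c' : A c -> A c' ->
  (forall x, M x -> x != i -> c x = c' x) -> h c = h c'.
Proof.
move=> Ac Ac' cc'.
pose pt (y : X) x := if x == i then y else c x.
have Mi_countable : countable (M `|` [set i]) := countableU M_countable (countable1 i).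
have /choice[s sP] y : exists e, A e /\ forall x, (M `|` [set i]) x -> e x = pt y x.
  by have [e Ae ep] := A_korovin Mi_countable (pt y); exists e.
pose phi y := h (s y).
have phi_pt y e : A e -> (forall x, M x -> e x = pt y x) -> phi y = h e.
  move=> Ae ep; apply: h_determined => // [|x Mx]; first exact: (sP y).1.
  by rewrite ep // (sP y).2 //; left.
have -> : h c = phi (c i).
  by symmetry; apply: phi_pt => // x _; rewrite /pt; case: eqP => [->|].
have -> : h c' = phi (c' i).
  symmetry; apply: phi_pt => // x Mx; rewrite /pt; case: eqP => [->//|/eqP xi].
  by rewrite cc'.
(* As M determines h, phi y is h at any point of A agreeing with c off i and
   taking the value y at i; continuity then comes from the local control of h. *)
apply: X_rigid => y0; apply/cvgrPdist_lt => eps eps_gt0.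
have [L [U ctrl]] := h_controlled (sP y0).1 eps_gt0.
have s_pt x : x != i -> M x -> s y0 x = c x.
  by move=> /negbTE xi Mx; rewrite (sP y0).2 /pt ?xi //; left.
have Ui : open_nbhs y0 (U i).
  by have := ctrl.1 i; rewrite (sP y0).2 /pt ?eqxx //; right.
apply: filterS (open_nbhs_nbhs Ui) => y Uy.
pose p x := if x \in M `|` [set i] then pt y x else s y0 x.
have [|e [Ae ep] close] :=
    controls_korovin A_korovin (N := M `|` [set i]) (p := p) ctrl Mi_countable.
  move=> x _; rewrite /p /pt; case: ifPn => [/set_mem Mix|_]; last exact: (ctrl.1 x).2.
  case: eqP => [->//|/eqP xi]; rewrite -s_pt //; first exact: (ctrl.1 x).2.
  by case: Mix => // /eqP; rewrite (negbTE xi).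
rewrite (phi_pt y e Ae) // => x Mx.
by rewrite ep /p ?mem_set //; left.
Qed.

Lemma determined_off_seq (L : seq G) c c' : A c -> A c' ->
  (forall x, M x -> x \notin L -> c x = c' x) -> h c = h c'.
Proof.
elim: L c c' => [|i L IH] c c' Ac Ac' cc'.
  by apply: h_determined => // x Mx; exact: cc'.
have [c2 Ac2 c2P] := A_korovin M_countable (fun x => if x == i then c x else c' x).
transitivity (h c2).
  apply: IH => // x Mx xL; rewrite c2P //; case: eqP => // /eqP xi.
  by apply: cc'; rewrite // in_cons negb_or xi.
apply: (@determined_off_point i) => // x Mx xi.
by rewrite c2P // (negbTE xi).
Qed.

Lemma const_of_determined a b : A a -> A b -> h a = h b.
Proof.
move=> Aa Ab; symmetry; apply: dist_lt_eq => eps eps_gt0.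
have [L [U ctrl]] := h_controlled Ab eps_gt0.
pose p x := if x \in L then b x else a x.
have [|e [Ae ep] close] := controls_korovin A_korovin (p := p) ctrl M_countable.
  by move=> x xL; rewrite /p xL; exact: (ctrl.1 x).2.
rewrite (@determined_off_seq L a e) // => x Mx xL.
by rewrite ep // /p (negbTE xL).
Qed.

End RigidityFromDeterminingSet.

Definition matches (G : Type) (X : Type) (P : set (G * X)) (c : G -> X) :=
  forall ix, P ix -> c ix.1 = ix.2.

Section DeterminingSet.
Variables (R : realType) (X : topologicalType) (G : choiceType).
Variables (A : set {ptws G -> X}) (h : {ptws G -> X} -> R).
Hypothesis A_korovin : korovin_set A.
Hypothesis h_controlled : locally_controlled A h.
Variable D : set X.
Hypothesis D_countable : countable D.
Hypothesis D_dense : dense D.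

Let tol k : R := k.+1%:R^-1.

Let tol_gt0 k : 0 < tol k. Proof. by rewrite invr_gt0. Qed.

Definition grid_fit (P : set (G * X)) (z : int) (k : nat) (c : {ptws G -> X}) :=
  [/\ A c, matches P c & `|h c - z%:~R * tol k| < tol k *+ 2].

(* A datum (P, z, k) is a finite pattern P with values in D together with the
   grid value z / (k + 1); grid_seq returns the coordinates controlling h, to
   within 1 / (k + 1), at some point of A that fits the datum, if there is one. *)
Definition grid_seq (P : set (G * X)) (z : int) (k : nat) : seq G :=
  xget [::] [set L | exists c U, grid_fit P z k c /\ controls A h L U c (tol k)].

Definition grid_hull (F : set G) : set G :=
  \bigcup_(t in [set t : set (G * X) * int * nat | t.1.1 `<=` F `*` D /\ finite_set t.1.1])
    [set` grid_seq t.1.1 t.1.2 t.2].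

Lemma grid_hull_countable F : finite_set F -> countable (grid_hull F).
Proof.
move=> fF; apply: bigcup_countable => [|t _]; last exact/finite_set_countable/finite_seq.
have FD_countable := countableX (finite_set_countable fF) D_countable.
apply: (sub_countable _ (countableX (countableX (countable_finite_subset FD_countable)
  (countableP [set: int])) (countableP [set: nat]))).
by apply: subset_card_le => -[[P z] k] /= [PFD fP].
Qed.

Lemma grid_seq_spec P z k c0 : grid_fit P z k c0 ->
  exists c U, grid_fit P z k c /\ controls A h (grid_seq P z k) U c (tol k).
Proof.
move=> fit0; apply: (xgetPex [::]
  (P := [set L | exists c U, grid_fit P z k c /\ controls A h L U c (tol k)])).
have [Ac0 _ _] := fit0; have [L [U ctrl]] := h_controlled Ac0 (tol_gt0 k).
by exists L, c0, U.
Qed.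

Variable M : set G.
Hypothesis M_closed : forall F, finite_set F -> F `<=` M -> grid_hull F `<=` M.

Lemma grid_reflect k L U c (F : set G) (q : G -> X) : A c -> controls A h L U c (tol k) ->
  finite_set F -> F `<=` M -> (forall i, F i -> U i (q i) /\ D (q i)) ->
  exists Ls Us cs, [/\ A cs, controls A h Ls Us cs (tol k), [set` Ls] `<=` M,
    forall i, F i -> cs i = q i & `|h c - h cs| < tol k *+ 3].
Proof.
move=> Ac ctrl fF FM qP; pose P := [set (i, q i) | i in F].
have [z hz] := grid_approx (h c) (tol_gt0 k).
have [|e1 [Ae1 e1q] close1] := controls_korovin A_korovin (N := F)
    (p := fun i => if i \in F then q i else c i) ctrl (finite_set_countable fF).
  by move=> i _; case: ifPn => [/set_mem/qP[]//|_]; exact: (ctrl.1 i).2.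
have fit1 : grid_fit P z k e1.
  split=> //; first by move=> _ [i Fi <-]; rewrite e1q // mem_set.
  by rewrite (le_lt_trans (ler_distD (h c) _ _)) // mulr2n ltrD // distrC.
have [cs [Us [[Acs cs_matches cs_dist] ctrl_s]]] := grid_seq_spec fit1.
exists (grid_seq P z k), Us, cs; split=> //.
- apply: subset_trans (M_closed fF FM) => x sx; exists (P, z, k) => //; split.
    by move=> _ [i Fi <-]; split=> //=; exact: (qP i Fi).2.
  exact: finite_image.
- by move=> i Fi; apply: (cs_matches (i, q i)); exists i.
- by rewrite (le_lt_trans (ler_distD (z%:~R * tol k) _ _)) // mulrS ltrD // distrC.
Qed.

Lemma grid_closed_determined : determined_by A h M.
Proof.
move=> c c' Ac Ac' cc'; apply: (@dist_lt_natSinv_eq _ 5) => // k.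
rewrite mulr_natr -/(tol k).
have [L1 [U1 ctrl1]] := h_controlled Ac (tol_gt0 k).
have [L2 [U2 ctrl2]] := h_controlled Ac' (tol_gt0 k).
pose F := M `&` [set` L1 ++ L2].
have /choice[q qP] i : exists y, F i -> (U1 i y /\ D y) /\ U2 i y.
  have [[Mi _]|nFi] := pselect (F i); last by exists (c i).
  have [|y [[U1y U2y] Dy]] := D_dense _ (openI (ctrl1.1 i).1 (ctrl2.1 i).1).
    by exists (c i); split; [exact: (ctrl1.1 i).2|rewrite cc' //; exact: (ctrl2.1 i).2].
  by exists y.
(* q fits both boxes on their coordinates in M, so the reflection cs of c
   through q, glued to c' outside its own coordinates, stays close to c'. *)
have [Ls [Us [cs [Acs ctrl_s LsM csq close_c]]]] := grid_reflect Ac ctrl1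
  (finite_setIr _ (finite_seq _)) (@subIsetl _ _ _) (fun i Fi => (qP i Fi).1).
have [|e3 [Ae3 e3cs] close3] := controls_korovin A_korovin
    (p := fun x => if x \in Ls then cs x else c' x) ctrl2 (finite_set_countable (finite_seq Ls)).
  move=> x xL2; case: ifPn => [xLs|_]; last exact: (ctrl2.1 x).2.
  have Fx : F x by split; [exact: LsM|rewrite /= mem_cat xL2 orbT].
  by rewrite csq //; exact: (qP x Fx).2.
have close_s : `|h cs - h e3| < tol k.
  by apply: ctrl_s.2 => // x xLs; rewrite e3cs //= xLs; exact: (ctrl_s.1 x).2.
rewrite (le_lt_trans (ler_distD (h cs) _ _)) // (mulrnDr _ 3 2) ltrD //.
by rewrite (le_lt_trans (ler_distD (h e3) _ _)) // mulr2n ltrD // distrC.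
Qed.

End DeterminingSet.

Theorem korovin_set_rigid (R : realType) (X : topologicalType) (G : choiceType)
    (A : set {ptws G -> X}) :
  separable_space X -> R_rigid R X -> korovin_set A -> R_rigid_subset R A.
Proof.
move=> [D [D_countable D_dense]] X_rigid A_korovin h h_cont.
have h_controlled := continuous_within_controlled h_cont.
have [M M_countable M_closed] := countable_finitary_closure
  (grid_hull_countable A h D_countable).
apply: (const_of_determined A_korovin h_controlled X_rigid M_countable).
exact: (grid_closed_determined A_korovin h_controlled D_dense M_closed).
Qed.

Theorem corollary4p8 (R : realType) (X : topologicalType) (G : zmodType)
  (sepX : separable_space X) (rigX : R_rigid R X)
  (twoX : exists x y : X, x <> y)
  (infG : ~ finite_set [set: G])
  (f : G -> X) (korf : Korovin_mapping f) :
  R_rigid_subset R (orbit_set f).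
Proof.
apply: korovin_set_rigid => // M M_countable p.
by have [g gp] := korf M M_countable p; exists (gshift f g) => //; exists g.
Qed.
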